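(* Let $\mathcal V$ be an operator space and $\mathcal D'\subseteq\mathcal D$ an inclusion of noncommutative domains in $\mathcal V_{\rm nc}$ ($\mathcal D'_n\subseteq\mathcal D_n$ for all $n$). Assume (1) $M:=\sup_{n\in\mathbb N}\sup_{x\in\mathcal D'_n}\|x\|<+\infty$ and (2) $m:=\inf_{n\in\mathbb N}\inf\{\|x-w\|\colon x\in\mathcal D'_n,\ w\in\mathcal V^{n\times n}\setminus\mathcal D_n\}>0$. Then there exists a constant $k\in[0,1)$ such that $k\,\tilde\delta_{\mathcal D'}(a,c)\ge\tilde\delta_{\mathcal D}(a,c)$ for all $n$ and all $a,c\in\mathcal D'_n$.
   Context: A noncommutative domain is a family $\mathcal D=(\mathcal D_n)$ of open sets $\mathcal D_n\subseteq\mathcal V^{n\times n}$ (with the operator-space norms) closed under direct sums. For $a\in\mathcal D_n,c\in\mathcal D_m,b\in\mathcal V^{n\times m}$, $\delta_{\mathcal D}(a,c)(b)=\big[\sup\{t\in[0,+\infty]\colon\begin{bmatrix}a&sb\\0&c\end{bmatrix}\in\mathcal D_{n+m}\ \forall s\in[0,t]\}\big]^{-1}$ ($1/0=+\infty,1/\infty=0$), and $\tilde\delta_{\mathcal D}(a,c)=\delta_{\mathcal D}(a,c)(a-c)$ for $a,c\in\mathcal D_n$. *)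

From mathcomp Require Import all_boot all_order all_algebra.
From mathcomp Require Import complex.
From mathcomp Require Import all_classical all_reals ereal.
Set Implicit Arguments. Unset Strict Implicit. Unset Printing Implicit Defensive.
Import Order.TTheory GRing.Theory Num.Theory.
Local Open Scope ring_scope.
Local Open Scope classical_set_scope.

Section OpSpace.
Variable R : realType.
Local Notation C := (R[i]).

Definition cabs (z : C) : R := Normc.normc z.

Definition vnorm n (v : 'cV[C]_n) : R := Num.sqrt (\sum_(i < n) cabs (v i 0) ^+ 2).

Definition opnorm p n (A : 'M[C]_(p, n)) : R :=
  sup [set vnorm (A *m v) | v in [set v : 'cV[C]_n | vnorm v <= 1]].

Variable V : lmodType C.

Definition mxscale n m (z : C) (x : 'M[V]_(n, m)) : 'M[V]_(n, m) := map_mx ( *:%R z) x.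

Definition scmx p n m q (al : 'M[C]_(p, n)) (x : 'M[V]_(n, m)) (be : 'M[C]_(m, q))
  : 'M[V]_(p, q) :=
  \matrix_(i, j) \sum_(k < n) \sum_(l < m) (al i k * be l j) *: x k l.

(* Ruan's axioms for a (rectangular) matrix-norm family on V:
   each nrm n m is a norm on V^{n x m}, plus
   (R1) ||x (+) y|| = max(||x||,||y||), (R2) ||alpha x beta|| <= ||alpha|| ||x|| ||beta||. *)
Record is_operator_space (nrm : forall n m, 'M[V]_(n, m) -> R) : Prop := {
  os_ge0 : forall n m (x : 'M[V]_(n, m)), 0 <= nrm n m x;
  os_eq0 : forall n m (x : 'M[V]_(n, m)), nrm n m x = 0 -> x = 0;
  os_scale : forall n m (z : C) (x : 'M[V]_(n, m)), nrm n m (mxscale z x) = cabs z * nrm n m x;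
  os_triangle : forall n m (x y : 'M[V]_(n, m)), nrm n m (x + y) <= nrm n m x + nrm n m y;
  os_R1 : forall n m p q (x : 'M[V]_(n, m)) (y : 'M[V]_(p, q)),
      nrm (n + p)%N (m + q)%N (block_mx x 0 0 y) = Num.max (nrm n m x) (nrm p q y);
  os_R2 : forall p n m q (al : 'M[C]_(p, n)) (x : 'M[V]_(n, m)) (be : 'M[C]_(m, q)),
      nrm p q (scmx al x be) <= opnorm al * nrm n m x * opnorm be
}.

Definition mx_open (nrm : forall n m, 'M[V]_(n, m) -> R) n (A : set 'M[V]_n) : Prop :=
  forall x, A x -> exists2 e : R, 0 < e & forall y, nrm n n (y - x) < e -> A y.

Definition nc_domain (nrm : forall n m, 'M[V]_(n, m) -> R) (D : forall n, set 'M[V]_n) : Prop :=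
  (forall n, (0 < n)%N -> mx_open nrm (D n)) /\
  (forall n m (a : 'M[V]_n) (c : 'M[V]_m), (0 < n)%N -> (0 < m)%N ->
     D n a -> D m c -> D (n + m)%N (block_mx a 0 0 c)).

End OpSpace.

Section Delta.
Variable R : realType.
Variable V : lmodType (R[i]).
Local Open Scope ereal_scope.

(* 1/t on [0,+oo], with 1/0 = +oo and 1/+oo = 0 *)
Definition einv (t : \bar R) : \bar R :=
  match t with
  | +oo => 0
  | -oo => 0
  | EFin r => if r == 0%R then +oo else (r^-1)%:E
  end.

Definition delta (D : forall n, set 'M[V]_n) n m (a : 'M[V]_n) (c : 'M[V]_m)
    (b : 'M[V]_(n, m)) : \bar R :=
  einv (ereal_sup [set t : \bar R | 0 <= t /\
     forall s : R, (0 <= s)%R -> s%:E <= t ->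
       D (n + m)%N (block_mx a (mxscale (s%:C)%C b) 0 c)]).

Definition deltat (D : forall n, set 'M[V]_n) n (a c : 'M[V]_n) : \bar R :=
  delta D a c (a - c).

End Delta.

(* For a, c in D' and b <> 0, write beta := ||b|| and let rho_E be the supremum
   of the t such that [[a, s b], [0, c]] lies in E for all s in [0, t], so that
   delta_E(a, c)(b) = 1 / rho_E.  Compressing to the upper-right corner, (R2)
   gives s beta <= ||[[a, s b], [0, c]]|| <= M whenever this matrix is in D',
   hence rho_D' <= M / beta.  Replacing s b by s' b moves the matrix by at most
   |s - s'| beta, so by the separation m every s' within m / beta of a point
   admissible for D' is admissible for D, hence rho_D >= rho_D' + m / beta.
   Therefore 1 / rho_D <= 1 / (rho_D' + m / beta) <= k / rho_D' with
   k = M / (M + m). *)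

From mathcomp Require Import all_boot all_order all_algebra.
From mathcomp Require Import complex.
From mathcomp Require Import all_classical all_reals ereal.
From mathcomp Require Import ring lra.
Import Order.TTheory GRing.Theory Num.Theory.
Local Open Scope ring_scope.
Local Open Scope classical_set_scope.

Section ScaledMatrices.
Context {R : realType}.
Local Notation C := (R[i]).
Context {V : lmodType C}.

Lemma mxscale0 n m (x : 'M[V]_(n, m)) : mxscale 0 x = 0.
Proof. by apply/matrixP => i j; rewrite !mxE scale0r. Qed.

Lemma mxscaler0 n m (z : C) : mxscale z (0 : 'M[V]_(n, m)) = 0.
Proof. by apply/matrixP => i j; rewrite !mxE scaler0. Qed.

Lemma mxscaleBl n m (z w : C) (x : 'M[V]_(n, m)) :
  mxscale z x - mxscale w x = mxscale (z - w) x.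
Proof. by apply/matrixP => i j; rewrite !mxE scalerBl. Qed.

Lemma scmx1 n m (x : 'M[V]_(n, m)) : scmx 1%:M x 1%:M = x.
Proof.
apply/matrixP => i j; rewrite mxE (bigD1 i) //= (bigD1 j) //= !mxE !eqxx mul1r scale1r.
rewrite big1 => [|l lj]; last by rewrite !mxE (negbTE lj) mulr0 scale0r.
rewrite addr0 big1 ?addr0 // => k ki.
by apply: big1 => l _; rewrite !mxE eq_sym (negbTE ki) mul0r scale0r.
Qed.

Lemma scmx0l p n m q (x : 'M[V]_(n, m)) (be : 'M[C]_(m, q)) : scmx (0 : 'M_(p, n)) x be = 0.
Proof.
apply/matrixP => i j; rewrite !mxE big1 // => k _.
by apply: big1 => l _; rewrite mxE mul0r scale0r.
Qed.

Lemma scmx0r p n m q (al : 'M[C]_(p, n)) (x : 'M[V]_(n, m)) : scmx al x (0 : 'M_(m, q)) = 0.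
Proof.
apply/matrixP => i j; rewrite !mxE big1 // => k _.
by apply: big1 => l _; rewrite mxE mulr0 scale0r.
Qed.

Lemma scmx_col_mxl p1 p2 n m q (al1 : 'M[C]_(p1, n)) (al2 : 'M[C]_(p2, n))
    (x : 'M[V]_(n, m)) (be : 'M[C]_(m, q)) :
  scmx (col_mx al1 al2) x be = col_mx (scmx al1 x be) (scmx al2 x be).
Proof.
rewrite -[LHS]vsubmxK; congr col_mx; apply/matrixP => i j; rewrite !mxE;
  by apply: eq_bigr => k _; apply: eq_bigr => l _; rewrite ?col_mxEu ?col_mxEd.
Qed.

Lemma scmx_row_mxr p n m q1 q2 (al : 'M[C]_(p, n)) (x : 'M[V]_(n, m))
    (be1 : 'M[C]_(m, q1)) (be2 : 'M[C]_(m, q2)) :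
  scmx al x (row_mx be1 be2) = row_mx (scmx al x be1) (scmx al x be2).
Proof.
rewrite -[LHS]hsubmxK; congr row_mx; apply/matrixP => i j; rewrite !mxE;
  by apply: eq_bigr => k _; apply: eq_bigr => l _; rewrite ?row_mxEl ?row_mxEr.
Qed.

Lemma scmx_row_mxl p n1 n2 m q (al1 : 'M[C]_(p, n1)) (al2 : 'M[C]_(p, n2))
    (x : 'M[V]_(n1 + n2, m)) (be : 'M[C]_(m, q)) :
  scmx (row_mx al1 al2) x be = scmx al1 (usubmx x) be + scmx al2 (dsubmx x) be.
Proof.
apply/matrixP => i j; rewrite !mxE big_split_ord /=.
by congr (_ + _); apply: eq_bigr => k _; apply: eq_bigr => l _;
  rewrite ?row_mxEl ?row_mxEr !mxE.
Qed.

Lemma scmx_col_mxr p n m1 m2 q (al : 'M[C]_(p, n)) (x : 'M[V]_(n, m1 + m2))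
    (be1 : 'M[C]_(m1, q)) (be2 : 'M[C]_(m2, q)) :
  scmx al x (col_mx be1 be2) = scmx al (lsubmx x) be1 + scmx al (rsubmx x) be2.
Proof.
apply/matrixP => i j; rewrite !mxE -big_split /=; apply: eq_bigr => k _.
by rewrite big_split_ord /=; congr (_ + _); apply: eq_bigr => l _;
  rewrite ?col_mxEu ?col_mxEd !mxE.
Qed.

Lemma block_mx_ur_scmx n1 n2 m1 m2 (y : 'M[V]_(n1, m2)) :
  block_mx 0 y 0 0 = scmx (col_mx 1%:M 0) y (row_mx 0 1%:M) :> 'M_(n1 + n2, m1 + m2).
Proof. by rewrite scmx_col_mxl !scmx_row_mxr !scmx0l scmx0r scmx1. Qed.

Lemma ursubmx_scmx n1 n2 m1 m2 (x : 'M[V]_(n1 + n2, m1 + m2)) :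
  ursubmx x = scmx (row_mx 1%:M 0) x (col_mx 0 1%:M).
Proof. by rewrite scmx_row_mxl scmx0l addr0 scmx_col_mxr scmx0r add0r scmx1. Qed.
End ScaledMatrices.

Section Contractions.
Context {R : realType}.
Local Notation C := (R[i]).

Lemma vnorm_ge0 n (v : 'cV[C]_n) : 0 <= vnorm v.
Proof. exact: sqrtr_ge0. Qed.

Lemma vnorm_col_mx n1 n2 (u : 'cV[C]_n1) (w : 'cV[C]_n2) :
  vnorm (col_mx u w) = Num.sqrt (vnorm u ^+ 2 + vnorm w ^+ 2).
Proof.
rewrite /vnorm big_split_ord !sqr_sqrtr ?sumr_ge0 // => [|i _|i _]; rewrite ?sqr_ge0 //.
by congr (Num.sqrt (_ + _)); apply: eq_bigr => i _; rewrite ?col_mxEu ?col_mxEd.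
Qed.

Lemma vnorm0 n : vnorm (0 : 'cV[C]_n) = 0.
Proof. by rewrite /vnorm big1 ?sqrtr0 // => i _; rewrite mxE /cabs Normc.normc0 expr0n. Qed.

Lemma vnorm_col_mx0 n1 n2 (u : 'cV[C]_n1) : vnorm (col_mx u (0 : 'cV_n2)) = vnorm u.
Proof. by rewrite vnorm_col_mx vnorm0 expr0n addr0 sqrtr_sqr ger0_norm ?vnorm_ge0. Qed.

Lemma vnorm_col_0mx n1 n2 (w : 'cV[C]_n2) : vnorm (col_mx (0 : 'cV_n1) w) = vnorm w.
Proof. by rewrite vnorm_col_mx vnorm0 expr0n add0r sqrtr_sqr ger0_norm ?vnorm_ge0. Qed.

Lemma vnorm_usubmx_le n1 n2 (v : 'cV[C]_(n1 + n2)) : vnorm (usubmx v) <= vnorm v.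
Proof.
rewrite -{2}(vsubmxK v) vnorm_col_mx.
rewrite -[leLHS]ger0_norm ?vnorm_ge0 // -sqrtr_sqr.
by rewrite ler_sqrt ?lerDl ?sqr_ge0 // addr_ge0 ?sqr_ge0.
Qed.

Lemma vnorm_dsubmx_le n1 n2 (v : 'cV[C]_(n1 + n2)) : vnorm (dsubmx v) <= vnorm v.
Proof.
rewrite -{2}(vsubmxK v) vnorm_col_mx.
rewrite -[leLHS]ger0_norm ?vnorm_ge0 // -sqrtr_sqr.
by rewrite ler_sqrt ?lerDr ?sqr_ge0 // addr_ge0 ?sqr_ge0.
Qed.

Lemma opnorm_contraction p n (A : 'M[C]_(p, n)) :
  (forall v, vnorm (A *m v) <= vnorm v) -> 0 <= opnorm A <= 1.
Proof.
rewrite /opnorm => contr; set S := (X in sup X).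
have S0 : S 0 by exists 0; rewrite /= ?mulmx0 vnorm0 ?ler01.
have S_ub : ubound S 1 by move=> _ [v /= v1 <-]; exact: le_trans (contr v) v1.
apply/andP; split; first by apply: ub_le_sup S0; exists 1.
by apply: ge_sup => //; exists 0.
Qed.

Lemma opnorm_col_mx10 n1 n2 : 0 <= opnorm (col_mx 1%:M 0 : 'M[C]_(n1 + n2, n1)) <= 1.
Proof.
by apply: opnorm_contraction => v; rewrite mul_col_mx mul1mx mul0mx vnorm_col_mx0.
Qed.

Lemma opnorm_col_mx01 n1 n2 : 0 <= opnorm (col_mx 0 1%:M : 'M[C]_(n1 + n2, n2)) <= 1.
Proof.
by apply: opnorm_contraction => v; rewrite mul_col_mx mul1mx mul0mx vnorm_col_0mx.
Qed.

Lemma opnorm_row_mx10 n1 n2 : 0 <= opnorm (row_mx 1%:M 0 : 'M[C]_(n1, n1 + n2)) <= 1.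
Proof.
apply: opnorm_contraction => v.
by rewrite -{1}(vsubmxK v) mul_row_col mul1mx mul0mx addr0 vnorm_usubmx_le.
Qed.

Lemma opnorm_row_mx01 n1 n2 : 0 <= opnorm (row_mx 0 1%:M : 'M[C]_(n2, n1 + n2)) <= 1.
Proof.
apply: opnorm_contraction => v.
by rewrite -{1}(vsubmxK v) mul_row_col mul1mx mul0mx add0r vnorm_dsubmx_le.
Qed.
End Contractions.

Section OperatorSpaceNorms.
Context {R : realType}.
Local Notation C := (R[i]).
Context {V : lmodType C}.
Context {nrm : forall n m, 'M[V]_(n, m) -> R}.
Hypothesis Hos : is_operator_space nrm.

Lemma nrm_scmx_contraction p n m q
    (al : 'M[C]_(p, n)) (x : 'M[V]_(n, m)) (be : 'M[C]_(m, q)) :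
  0 <= opnorm al <= 1 -> 0 <= opnorm be <= 1 -> nrm _ _ (scmx al x be) <= nrm _ _ x.
Proof.
move=> /andP[al0 al1] /andP[be0 be1]; apply: le_trans (os_R2 Hos al x be) _.
rewrite -[leRHS]mulr1 ler_pM ?mulr_ge0 ?(os_ge0 Hos) //.
by rewrite -[leRHS]mul1r ler_pM ?(os_ge0 Hos).
Qed.

Lemma nrm_block_ur_le {n1 n2 m1 m2} (y : 'M[V]_(n1, m2)) :
  nrm (n1 + n2)%N (m1 + m2)%N (block_mx 0 y 0 0) <= nrm _ _ y.
Proof.
by rewrite block_mx_ur_scmx nrm_scmx_contraction ?opnorm_col_mx10 ?opnorm_row_mx01.
Qed.

Lemma nrm_ursubmx_le n1 n2 m1 m2 (x : 'M[V]_(n1 + n2, m1 + m2)) :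
  nrm _ _ (ursubmx x) <= nrm _ _ x.
Proof.
by rewrite ursubmx_scmx nrm_scmx_contraction ?opnorm_row_mx10 ?opnorm_col_mx01.
Qed.

Lemma nrm_mxscale_real n m (s : R) (x : 'M[V]_(n, m)) :
  nrm _ _ (mxscale s%:C%C x) = `|s| * nrm _ _ x.
Proof.
by rewrite (os_scale Hos) /cabs /Normc.normc /= expr0n /= addr0 sqrtr_sqr.
Qed.
End OperatorSpaceNorms.

Section Reach.
Context {R : realType}.
Local Open Scope ereal_scope.

Definition reach (P : R -> Prop) : \bar R :=
  ereal_sup [set t : \bar R | 0 <= t /\
    forall s : R, (0 <= s)%R -> s%:E <= t -> P s].

Implicit Types (P Q : R -> Prop).

Lemma reach_ge0 {P} : P 0%R -> 0 <= reach P.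
Proof.
move=> P0; apply: ereal_sup_ubound; split => // s s0.
by rewrite lee_fin => s_le0; have -> : s = 0%R by apply/eqP; rewrite eq_le s_le0.
Qed.

Lemma lt_reach {P} (s : R) : (0 <= s)%R -> s%:E < reach P -> P s.
Proof. by move=> s0 /ereal_sup_gt[t [_ Pt] /ltW]; apply: Pt. Qed.

Lemma reach_ge {P} (t : R) : (0 <= t)%R ->
  (forall s : R, (0 <= s <= t)%R -> P s) -> t%:E <= reach P.
Proof.
move=> t0 Pt; apply: ereal_sup_ubound; split => [|s s0]; first by rewrite lee_fin.
by rewrite lee_fin => st; apply: Pt; rewrite s0.
Qed.

Lemma reach_le {P} (x : R) : (0 <= x)%R ->
  (forall s : R, (0 <= s)%R -> P s -> (s <= x)%R) -> reach P <= x%:E.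
Proof.
move=> x0 Px; apply: ge_ereal_sup => -[t| |] [t0 Pt] //.
  by rewrite lee_fin in t0 *; apply/Px/Pt.
have /Px : P (x + 1)%R by apply: Pt; rewrite ?leey // addr_ge0.
by move=> /(_ (addr_ge0 x0 ler01)); rewrite gerDl ler10.
Qed.

Lemma reach_pinfty {P} : (forall s : R, (0 <= s)%R -> P s) -> reach P = +oo.
Proof. by move=> Ps; apply: ereal_supy; split => // s s0 _; apply: Ps. Qed.

Lemma reach_le_subset {P Q} : (forall s, (0 <= s)%R -> P s -> Q s) -> reach P <= reach Q.
Proof.
by move=> PQ; apply: ereal_sup_le => t [t0 Pt]; split => // s s0 st; apply/PQ/Pt.
Qed.

Lemma reach_shift {P Q} (h : R) : (0 < h)%R -> P 0%R ->
  (forall s s' : R, (0 <= s)%R -> P s -> (0 <= s')%R -> (`|s' - s| < h)%R -> Q s') ->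
  reach P + h%:E <= reach Q.
Proof.
move=> h0 P0 PQ.
have PsubQ s : (0 <= s)%R -> P s -> Q s.
  by move=> s0 Ps; apply: (PQ s) => //; rewrite subrr normr0.
have Q0 : 0 <= reach Q by apply/reach_ge0/PsubQ.
have := reach_le_subset PsubQ; have := reach_ge0 P0.
case rP: (reach P) => [r| |] // r0 rQ.
rewrite lee_fin in r0; apply/lee_subgt0Pr => e e0; rewrite -!EFinD.
have [t0|t_lt0] := leP 0%R (r + h - e)%R; last by apply: le_trans Q0; rewrite lee_fin ltW.
apply: reach_ge => [//|s' /andP[s'0 s't]].
have [s'r|rs'] := ltP s' r.
  by apply: (PsubQ _ s'0 (lt_reach s' s'0 _)); rewrite rP lte_fin.
have [s'h|hs'] := ltP s' h; first by apply: (PQ 0%R s') => //; rewrite subr0 ger0_norm.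
(* a point of [0, r) within distance h of s' *)
apply: (PQ ((s' - h + r) / 2)%R) => //; first lra.
  by apply: lt_reach; rewrite ?rP ?lte_fin; lra.
by rewrite ger0_norm; lra.
Qed.
End Reach.

Section Einv.
Context {R : realType}.
Local Open Scope ereal_scope.

Lemma le_einv (x y : \bar R) : 0 < x -> x <= y -> einv y <= einv x.
Proof.
case: x => [r| |] //; last by rewrite leye_eq => _ /eqP->.
rewrite lte_fin => r0; case: y => [u| |] //= ru; rewrite (gt_eqF r0).
  rewrite lee_fin in ru; have u0 := lt_le_trans r0 ru.
  by rewrite (gt_eqF u0) lee_fin lef_pV2 ?posrE.
by rewrite lee_fin invr_ge0 ltW.
Qed.

Lemma einv_addr_le (K h : R) (x : \bar R) : (0 < K)%R -> (0 < h)%R -> 0 <= x <= K%:E ->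
  einv (x + h%:E) <= (K / (K + h))%:E * einv x.
Proof.
move=> K0 h0; case: x => [r| |] /andP[] //; rewrite ?leye_eq // !lee_fin => r0 rK /=.
have [->|rpos] := eqVneq r 0%R.
  by rewrite gt0_muley ?leey // lte_fin divr_gt0 // addr_gt0.
have {}rpos : (0 < r)%R by rewrite lt_def rpos.
rewrite gt_eqF ?addr_gt0 // -EFinM lee_fin -subr_ge0.
have -> : (K / (K + h) * r^-1 - (r + h)^-1 = h * (K - r) / ((K + h) * r * (r + h)))%R.
  by field; rewrite !gt_eqF ?addr_gt0.
by apply: divr_ge0; apply: mulr_ge0; try apply: mulr_ge0; lra.
Qed.
End Einv.

Section ExtendedBounds.
Context {R : realType}.
Local Open Scope ereal_scope.

Lemma ereal_sup_lty_bound (S : set (\bar R)) : ereal_sup S < +oo ->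
  exists2 M : R, (0 < M)%R & forall x, S x -> x <= M%:E.
Proof.
have S_ub := @ereal_sup_ubound _ S.
case: (ereal_sup S) S_ub => [r| |] // S_ub _.
  exists (Num.max 1 r)%R; first by rewrite lt_max ltr01.
  by move=> x /S_ub /le_trans; apply; rewrite lee_fin le_max lexx orbT.
by exists 1%R => // x /S_ub; rewrite leeNy_eq => /eqP ->; rewrite leNye.
Qed.

Lemma ereal_inf_gt0_bound (S : set (\bar R)) : 0 < ereal_inf S ->
  exists2 m : R, (0 < m)%R & forall x, S x -> m%:E <= x.
Proof.
have Slb := @ereal_inf_lbound _ S.
case: (ereal_inf S) Slb => [r| |] // Slb; first by rewrite lte_fin => r0; exists r.
by exists 1%R => // x /Slb; rewrite leye_eq => /eqP ->; rewrite leey.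
Qed.
End ExtendedBounds.

Section NestedDomains.
Context {R : realType}.
Local Notation C := (R[i]).
Context {V : lmodType C}.

Definition slice (E : forall k, set 'M[V]_k) {n p} (a : 'M[V]_n) (c : 'M[V]_p)
    (b : 'M[V]_(n, p)) (s : R) : Prop :=
  E (n + p)%N (block_mx a (mxscale s%:C%C b) 0 c).

Lemma deltaE (E : forall k, set 'M[V]_k) n p (a : 'M[V]_n) (c : 'M[V]_p) b :
  delta E a c b = einv (reach (slice E a c b)).
Proof. by []. Qed.

Context {nrm : forall n m, 'M[V]_(n, m) -> R}.
Hypothesis Hos : is_operator_space nrm.
Context {D D' : forall n, set 'M[V]_n}.
Hypothesis D'_sum : forall n m (a : 'M[V]_n) (c : 'M[V]_m), (0 < n)%N -> (0 < m)%N ->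
  D' n a -> D' m c -> D' (n + m)%N (block_mx a 0 0 c).
Context {M m : R}.
Hypothesis M_gt0 : 0 < M.
Hypothesis m_gt0 : 0 < m.
Hypothesis D'_bounded : forall n, (0 < n)%N -> forall x, D' n x -> nrm n n x <= M.
Hypothesis D'_separated : forall n, (0 < n)%N -> forall x w, D' n x -> ~ D n w ->
  m <= nrm n n (x - w).

Context {n p : nat} {a : 'M[V]_n} {c : 'M[V]_p}.
Hypotheses (n_gt0 : (0 < n)%N) (p_gt0 : (0 < p)%N) (Da : D' n a) (Dc : D' p c).

Let np_gt0 : (0 < n + p)%N. Proof. by rewrite addn_gt0 n_gt0. Qed.

Lemma slice0 b : slice D' a c b 0.
Proof. by rewrite /slice mxscale0; apply: D'_sum. Qed.

Lemma slice_near b s s' :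
  slice D' a c b s -> `|s' - s| * nrm n p b < m -> slice D a c b s'.
Proof.
move=> Ps lt_m; apply: contrapT => Ps'.
have := D'_separated _ np_gt0 _ _ Ps Ps'; rewrite opp_block_mx add_block_mx !subrr.
rewrite mxscaleBl -rmorphB => /le_trans/(_ (nrm_block_ur_le Hos _)).
by rewrite nrm_mxscale_real // distrC leNgt lt_m.
Qed.

Lemma reach_slice_le b : 0 < nrm n p b ->
  (reach (slice D' a c b) <= (M / nrm n p b)%:E)%E.
Proof.
move=> b_gt0; apply: reach_le => [|s s0 Ps]; first by rewrite divr_ge0 // ltW.
rewrite ler_pdivlMr // -[s]ger0_norm // -nrm_mxscale_real //.
apply: le_trans (D'_bounded _ np_gt0 _ Ps).
by rewrite -[X in nrm _ _ X](block_mxKur a _ 0 c) nrm_ursubmx_le.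
Qed.

Lemma reach_slice_shift b : 0 < nrm n p b ->
  (reach (slice D' a c b) + (m / nrm n p b)%:E <= reach (slice D a c b))%E.
Proof.
move=> b_gt0; apply: reach_shift => [||s s' _ Ps _ lt_h]; first by rewrite divr_gt0.
  exact: slice0.
by apply: slice_near Ps _; rewrite -ltr_pdivlMr.
Qed.

Lemma delta_le_scale b : (delta D a c b <= (M / (M + m))%:E * delta D' a c b)%E.
Proof.
have reach'_ge0 := reach_ge0 (slice0 b).
rewrite !deltaE; have [->|b_neq0] := eqVneq b 0.
  have slice'_y : reach (slice D' a c 0) = +oo%E.
    by apply: reach_pinfty => s _; rewrite /slice mxscaler0; apply: D'_sum.
  have slice_y : reach (slice D a c 0) = +oo%E.
    apply/eqP; rewrite -leye_eq -slice'_y; apply: reach_le_subset => s _ Ps.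
    by apply: slice_near Ps _; rewrite subrr normr0 mul0r.
  by rewrite slice'_y slice_y /= mule0.
have b_gt0 : 0 < nrm n p b.
  by rewrite lt_def (os_ge0 Hos) andbT; apply: contra b_neq0 => /eqP/(os_eq0 Hos)->.
have -> : M / (M + m) = (M / nrm n p b) / (M / nrm n p b + m / nrm n p b).
  by field; rewrite !gt_eqF ?addr_gt0.
apply: (le_trans (le_einv _ _ _ (reach_slice_shift _ b_gt0))).
  by rewrite lte_spaddre ?lte_fin ?divr_gt0.
by apply: einv_addr_le; rewrite ?divr_gt0 ?reach'_ge0 ?reach_slice_le.
Qed.
End NestedDomains.

Theorem proposition5p3 (R : realType) (V : lmodType (R[i]))
  (nrm : forall n m, 'M[V]_(n, m) -> R) (Hos : is_operator_space nrm)
  (D D' : forall n, set 'M[V]_n)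
  (HD : nc_domain nrm D) (HD' : nc_domain nrm D')
  (Hincl : forall n, (0 < n)%N -> D' n `<=` D n)
  (HM : (ereal_sup [set r : \bar R | exists n, (0 < n)%N /\
            exists x : 'M[V]_n, D' n x /\ r = (nrm n n x)%:E] < +oo)%E)
  (Hm : (0 < ereal_inf [set r : \bar R | exists n, (0 < n)%N /\
            exists (x w : 'M[V]_n), D' n x /\ ~ D n w /\ r = (nrm n n (x - w))%:E])%E) :
  exists k : R, 0 <= k < 1 /\
    forall n, (0 < n)%N -> forall a c : 'M[V]_n, D' n a -> D' n c ->
      (k%:E * deltat D' a c >= deltat D a c)%E.
Proof.
have [M M0 ubM] := ereal_sup_lty_bound _ HM.
have [m m0 lbm] := ereal_inf_gt0_bound _ Hm.
have D'_bounded n : (0 < n)%N -> forall x, D' n x -> nrm n n x <= M.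
  by move=> n0 x Dx; rewrite -lee_fin; apply: ubM; exists n; split => //; exists x.
have D'_separated n : (0 < n)%N -> forall x w, D' n x -> ~ D n w -> m <= nrm n n (x - w).
  by move=> n0 x w Dx Dw; rewrite -lee_fin; apply: lbm; exists n; split => //; exists x, w.
exists (M / (M + m)); split.
  by rewrite divr_ge0 ?ltW ?addr_gt0 //= ltr_pdivrMr ?addr_gt0 // mul1r ltrDl.
move=> n n0 a c Da Dc.
exact: (delta_le_scale Hos HD'.2 M0 m0 D'_bounded D'_separated n0 n0 Da Dc).
Qed.
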